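(* Let $n$ be a non-negative integer and $r,s\in\mathbb{C}\setminus\mathbb{Z}^{-}$ with $s\ne0$ and $r-s\notin\mathbb{Z}^{-}$. Then \[ \sum_{k=0}^{n-1}\frac{H_{n-1-k}}{(k+s)\binom{r+k+1}{r-s+1}}=\frac{H_n}{s\binom{r}{s}}-\frac{1}{r-s+1}\sum_{k=1}^{n}\frac{1}{k\binom{n-k+r}{r-s+1}}. \] In particular, for every real $s\geq1$, \[ \sum_{k=0}^{n}\frac{H_{n-k}}{(k+s)(k+1+s)}=\frac{n+1}{s(n+1+s)}H_{n+1}-\frac{1}{n+1+s}(H_{n+s}-H_{s-1}) \] and \[ \sum_{k=0}^{n}\frac{H_{n-k}}{(k+s)(k+1+s)(k+2+s)}=\frac12\left(\frac{H_{n+1}}{s(s+1)}-\frac{1}{n+1+s}(H_{n+1}+H_{n+s}-H_{s-1})+\frac{1}{n+2+s}(H_{n+1}+H_{n+1+s}-H_s)\right). \]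
   Context: $\mathbb{Z}^{-}$ denotes the set of negative integers. For complex $z$ not a negative integer, $H_z=\psi(z+1)+\gamma$ ($\psi$ the digamma function, $\gamma$ Euler's constant); for integers $m\geq 0$, $H_m=\sum_{j=1}^m1/j$. Binomial coefficients with complex entries: $\binom{x}{y}=\frac{\Gamma(x+1)}{\Gamma(y+1)\Gamma(x-y+1)}$. *)

From Stdlib Require Import Reals ClassicalEpsilon Arith Factorial.
From Coquelicot Require Import Coquelicot.
Open Scope C_scope.

Fixpoint csum (f : nat -> C) (n : nat) : C :=
  match n with O => 0 | S m => csum f m + f m end.

Fixpoint cprod (f : nat -> C) (n : nat) : C :=
  match n with O => 1 | S m => cprod f m * f m end.

Definition Hn (m : nat) : C := csum (fun j => / RtoC (INR (S j))) m.

Definition not_negint (z : C) : Prop := forall m : nat, z <> - RtoC (INR (S m)).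

(* real power a^z = exp (z ln a) for a > 0 real, z complex *)
Definition rpowC (a : R) (z : C) : C :=
  (exp (Re z * ln a) * cos (Im z * ln a), exp (Re z * ln a) * sin (Im z * ln a))%R.

(* Gauss's product formula : Gamma z = lim_m m! m^z / (z (z+1) ... (z+m)) *)
Definition gauss_seq (z : C) (m : nat) : C :=
  RtoC (INR (fact m)) * rpowC (INR m) z / cprod (fun j => z + RtoC (INR j)) (S m).

Definition CGamma (z : C) : C :=
  epsilon (inhabits (RtoC 0)) (fun l : C => filterlim (gauss_seq z) eventually (locally l)).

Definition Cderiv (f : C -> C) (z : C) : C :=
  epsilon (inhabits (RtoC 0))
    (fun l : C => @is_derive C_AbsRing C_NormedModule f z l).

Definition digamma (z : C) : C := Cderiv CGamma z / CGamma z.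

Definition euler_gamma : R :=
  real (Lim_seq (fun n => (Re (Hn n) - ln (INR n))%R)).

Definition Hc (z : C) : C := digamma (z + 1) + RtoC euler_gamma.

Definition cbinom (x y : C) : C :=
  CGamma (x + 1) / (CGamma (y + 1) * CGamma (x - y + 1)).

(* With a_k = Gamma(s+k)/Gamma(r+1+k), the functional equation Gamma(z+1) = z Gamma(z)
   turns the k-th summand on the left into Gamma(r-s+1) H_{n-1-k} (a_k - a_{k+1}).  Summation
   by parts against the harmonic numbers, whose increments are 1/(j+1), leaves H_n a_0 and the
   convolution sum_j a_{n-1-j}/(j+1), which are the two terms on the right.  The special cases
   come the same way from a_k = 1/(k+s) and a_k = 1/((k+s)(k+s+1)), using the partial fractions
   1/((j+1)(c+N-1-j)) = (1/(j+1) + 1/(c+N-1-j))/(c+N) and H_{x+n} - H_{x-1} = sum_{j<=n} 1/(x+j)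
   for real x >= 1 (only differences of H_z occur, so Euler's constant cancels).

   Since Gamma is defined by Gauss's product, its existence, its functional equation and the
   digamma recurrence are derived from that product.  Its factors are 1 + O(1/j^2), which
   gives a nonzero limit.  For real x >= 1, comparing the products at x + h and x gives
   Gamma(x+h) = Gamma(x) (1 + h c(x) + O(h^2)) with c(x) = lim (ln m - sum_{j<=m} 1/(x+j)), so
   psi(x) = c(x), and c(x+1) - c(x) = 1/x is read off the approximants. *)

From Stdlib Require Import Reals Factorial ClassicalEpsilon Lra Lia Psatz.
From Coquelicot Require Import Coquelicot.
Open Scope C_scope.

Lemma INR_S_pos (n : nat) : (0 < INR (S n))%R.
Proof. apply lt_0_INR; lia. Qed.

Lemma RtoC_neq0 (y : R) : (0 < y)%R -> RtoC y <> 0.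
Proof. intros H E; apply RtoC_inj in E; lra. Qed.

Lemma RtoC_INR_S (n : nat) : RtoC (INR (S n)) = RtoC (INR n) + 1.
Proof. rewrite S_INR, RtoC_plus; auto. Qed.

Lemma INR_add_real_neq0 (k : nat) (x : R) : (0 < x)%R -> RtoC (INR k) + RtoC x <> 0.
Proof. intro Hx; rewrite <- RtoC_plus; apply RtoC_neq0; pose proof (pos_INR k); lra. Qed.

Lemma Cmod_RtoC_nonneg (x : R) : (0 <= x)%R -> Cmod (RtoC x) = x.
Proof. intro; rewrite Cmod_R, Rabs_right; lra. Qed.

Lemma Cinv_neq0 (a : C) : a <> 0 -> / a <> 0.
Proof. intros H E; apply C1_nz; rewrite <- (Cinv_r a H), E; ring. Qed.

Lemma Cmod_neq0 (a : C) : (0 < Cmod a)%R -> a <> 0.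
Proof. intros H E; rewrite E, Cmod_0 in H; lra. Qed.

Lemma Cmod_1_add_ge (b : C) : (Cmod b <= / 2)%R -> (/ 2 <= Cmod (1 + b))%R.
Proof.
  intro Hb; pose proof (Cmod_triangle (1 + b) (- b)) as H.
  replace (1 + b + - b) with (RtoC 1) in H by ring.
  rewrite Cmod_opp, Cmod_1 in H; lra.
Qed.

Definition cexp (w : C) : C :=
  (exp (Re w) * cos (Im w), exp (Re w) * sin (Im w))%R.

Lemma C_ext (a b : C) : Re a = Re b -> Im a = Im b -> a = b.
Proof. destruct a, b; simpl; intros -> ->; reflexivity. Qed.

Lemma cexp_add (a b : C) : cexp (a + b) = cexp a * cexp b.
Proof.
  destruct a as [x1 y1], b as [x2 y2]; unfold cexp, Cplus, Cmult; simpl.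
  rewrite exp_plus, cos_plus, sin_plus; apply C_ext; simpl; ring.
Qed.

Lemma cexp_0 : cexp 0 = 1.
Proof. unfold cexp; simpl; rewrite exp_0, cos_0, sin_0; apply C_ext; simpl; ring. Qed.

Lemma cexp_RtoC (x : R) : cexp (RtoC x) = RtoC (exp x).
Proof. unfold cexp; simpl; rewrite cos_0, sin_0; apply C_ext; simpl; ring. Qed.

Lemma Cmod_cexp (w : C) : Cmod (cexp w) = exp (Re w).
Proof.
  apply Rsqr_inj; [apply Cmod_ge_0 | left; apply exp_pos |].
  rewrite !Rsqr_pow2, Cmod2_alt; unfold cexp, Re, Im; cbn [fst snd].
  pose proof (sin2_cos2 (snd w)) as H; rewrite !Rsqr_pow2 in H.
  replace (exp (fst w) ^ 2)%R
    with (exp (fst w) ^ 2 * (sin (snd w) ^ 2 + cos (snd w) ^ 2))%R by (rewrite H; ring).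
  ring.
Qed.

Lemma cexp_neq0 (w : C) : cexp w <> 0.
Proof.
  intro H; pose proof (exp_pos (Re w)) as Hpos.
  rewrite <- Cmod_cexp, H, Cmod_0 in Hpos; lra.
Qed.

Lemma rpowC_cexp (a : R) (z : C) : rpowC a z = cexp (z * RtoC (ln a)).
Proof. destruct z as [x y]; apply C_ext; unfold rpowC, cexp; simpl; f_equal; f_equal; ring. Qed.

Section Elementary_bounds.
Local Open Scope R_scope.

Lemma exp_le_compat (x y : R) : x <= y -> exp x <= exp y.
Proof. intros [H | ->]; [left; apply exp_increasing | right]; auto. Qed.

Lemma exp_sub_1_le_mul_exp (t : R) : exp t - 1 <= t * exp t.
Proof.
  pose proof (exp_ineq1_le (- t)) as H; rewrite exp_Ropp in H; pose proof (exp_pos t).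
  apply (Rmult_le_compat_r (exp t)) in H; [|lra]; rewrite Rinv_l in H by lra; nra.
Qed.

Lemma exp_le_inv_1_sub (x : R) : x < 1 -> exp x <= / (1 - x).
Proof.
  intro Hx; pose proof (exp_ineq1_le (- x)) as H; rewrite exp_Ropp in H.
  pose proof (exp_pos x).
  apply (Rmult_le_reg_l (1 - x)); [lra|]; rewrite Rinv_r by lra.
  apply (Rmult_le_reg_r (/ exp x)); [apply Rinv_0_lt_compat; lra|].
  rewrite Rmult_assoc, Rinv_r by lra; lra.
Qed.

Lemma Rabs_exp_sub_1_sub_le (x : R) : Rabs x <= / 2 -> Rabs (exp x - 1 - x) <= 2 * x ^ 2.
Proof.
  intro Hx; apply Rabs_le_between in Hx.
  pose proof (exp_ineq1_le x); pose proof (exp_le_inv_1_sub x ltac:(lra)).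
  rewrite Rabs_right by lra.
  assert (/ (1 - x) - 1 - x = x ^ 2 / (1 - x)) by (field; lra).
  assert (x ^ 2 / (1 - x) <= 2 * x ^ 2).
  { unfold Rdiv; apply (Rmult_le_reg_r (1 - x)); [lra|].
    rewrite Rmult_assoc, Rinv_l by lra; nra. }
  lra.
Qed.

Lemma Rabs_exp_sub_1_le (x : R) : Rabs x <= / 2 -> Rabs (exp x - 1) <= 2 * Rabs x.
Proof.
  intro Hx; pose proof (Rabs_exp_sub_1_sub_le x Hx) as H.
  assert (x ^ 2 <= Rabs x * / 2).
  { rewrite <- (pow2_abs x); simpl; rewrite Rmult_1_r.
    apply Rmult_le_compat_l; [apply Rabs_pos | lra]. }
  replace (exp x - 1) with ((exp x - 1 - x) + x) by ring.
  eapply Rle_trans; [apply Rabs_triang | lra].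
Qed.

Lemma sin_between (y : R) : 0 <= y <= 1 -> y - y ^ 3 / 6 <= sin y <= y.
Proof.
  intro Hy; destruct (pre_sin_bound y 0) as [H1 H2]; try lra.
  unfold sin_approx, sin_term in H1, H2; simpl in H1, H2.
  field_simplify in H1; field_simplify in H2.
  assert (y ^ 5 <= y ^ 3).
  { replace (y ^ 5) with (y ^ 3 * y ^ 2) by ring.
    assert (0 <= y ^ 3) by (apply pow_le; lra); assert (y ^ 2 <= 1) by nra; nra. }
  split; lra.
Qed.

Lemma Rabs_sin_sub_le (y : R) : Rabs y <= 1 -> Rabs (sin y - y) <= y ^ 2 /\ Rabs (sin y) <= Rabs y.
Proof.
  assert (Hpos : forall t, 0 <= t <= 1 -> Rabs (sin t - t) <= t ^ 2 /\ Rabs (sin t) <= Rabs t).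
  { intros t Ht; destruct (sin_between t Ht) as [A B].
    assert (t ^ 3 <= t ^ 2) by (replace (t ^ 3) with (t ^ 2 * t) by ring; nra).
    rewrite (Rabs_right t), Rabs_left1, Rabs_right by nra; split; nra. }
  intro Hy; apply Rabs_le_between in Hy; destruct (Rle_dec 0 y).
  - apply Hpos; lra.
  - destruct (Hpos (- y)) as [H1 H2]; [lra|].
    replace (sin (- y) - - y) with (- (sin y - y)) in H1 by (rewrite sin_neg; ring).
    rewrite sin_neg, !Rabs_Ropp in *; replace ((- y) ^ 2) with (y ^ 2) in H1 by ring; auto.
Qed.

Lemma Rabs_cos_sub_1_le (y : R) : Rabs y <= 1 -> Rabs (cos y - 1) <= y ^ 2 / 2.
Proof.
  intro Hy; apply Rabs_le_between in Hy.
  destruct (pre_cos_bound y 0) as [H1 _]; try lra.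
  unfold cos_approx, cos_term in H1; simpl in H1; field_simplify in H1.
  pose proof (COS_bound y); rewrite Rabs_left1; lra.
Qed.

Lemma Rabs_exp_cos_sub_le (x y : R) : Rabs x <= / 2 -> Rabs y <= 1 ->
  Rabs (exp x * cos y - 1 - x) <= 2 * x ^ 2 + y ^ 2.
Proof.
  intros Hx Hy.
  replace (exp x * cos y - 1 - x) with ((exp x - 1 - x) * cos y + (1 + x) * (cos y - 1)) by ring.
  eapply Rle_trans; [apply Rabs_triang|]; rewrite !Rabs_mult.
  pose proof (Rabs_exp_sub_1_sub_le x Hx); pose proof (Rabs_cos_sub_1_le y Hy).
  assert (Rabs (cos y) <= 1) by (apply Rabs_le, COS_bound).
  assert (Rabs (1 + x) <= 3 / 2) by (apply Rabs_le; apply Rabs_le_between in Hx; lra).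
  pose proof (Rabs_pos (exp x - 1 - x)); pose proof (Rabs_pos (cos y - 1)).
  pose proof (Rabs_pos (cos y)); pose proof (Rabs_pos (1 + x)); nra.
Qed.

Lemma Rabs_exp_sin_sub_le (x y : R) : Rabs x <= / 2 -> Rabs y <= 1 ->
  Rabs (exp x * sin y - y) <= x ^ 2 + 2 * y ^ 2.
Proof.
  intros Hx Hy.
  replace (exp x * sin y - y) with ((exp x - 1) * sin y + (sin y - y)) by ring.
  eapply Rle_trans; [apply Rabs_triang|]; rewrite Rabs_mult.
  pose proof (Rabs_exp_sub_1_le x Hx); destruct (Rabs_sin_sub_le y Hy).
  pose proof (Rabs_pos (exp x - 1)); pose proof (Rabs_pos (sin y)).
  assert (2 * Rabs x * Rabs y <= x ^ 2 + y ^ 2).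
  { rewrite <- (pow2_abs x), <- (pow2_abs y); pose proof (pow2_ge_0 (Rabs x - Rabs y)); nra. }
  nra.
Qed.

End Elementary_bounds.

Lemma Cmod_le_Rabs_add (v : C) : (Cmod v <= Rabs (Re v) + Rabs (Im v))%R.
Proof.
  pose proof (Rabs_pos (Re v)); pose proof (Rabs_pos (Im v)).
  apply Rsqr_incr_0; [| apply Cmod_ge_0 | lra].
  rewrite !Rsqr_pow2, Cmod2_alt, <- (pow2_abs (Re v)), <- (pow2_abs (Im v)); nra.
Qed.

Lemma im_le_Cmod (v : C) : (Rabs (Im v) <= Cmod v)%R.
Proof. pose proof (Rmax_Cmod v); pose proof (Rmax_r (Rabs (fst v)) (Rabs (snd v))); unfold Im; lra. Qed.

Lemma Cmod_cexp_sub_1_sub_le (w : C) : (Cmod w <= / 2)%R -> (Cmod (cexp w - 1 - w) <= 3 * Cmod w ^ 2)%R.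
Proof.
  intro Hw; pose proof (re_le_Cmod w); pose proof (im_le_Cmod w).
  eapply Rle_trans; [apply Cmod_le_Rabs_add|]; rewrite Cmod2_alt.
  destruct w as [x y]; unfold cexp, Re, Im in *; simpl in *.
  replace (exp x * cos y + - (1) + - x)%R with (exp x * cos y - 1 - x)%R by ring.
  replace (exp x * sin y + - 0 + - y)%R with (exp x * sin y - y)%R by ring.
  pose proof (Rabs_exp_cos_sub_le x y ltac:(lra) ltac:(lra)).
  pose proof (Rabs_exp_sin_sub_le x y ltac:(lra) ltac:(lra)); lra.
Qed.

Notation Clim_seq u l := (@filterlim nat C u eventually (locally (l : C))).

Lemma Clim_seq_spec (u : nat -> C) (l : C) : Clim_seq u l <->
  forall eps : R, (0 < eps)%R -> exists N, forall n, (N <= n)%nat -> (Cmod (u n - l) < eps)%R.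
Proof.
  rewrite filterlim_locally_ball_norm; split.
  - intros H eps Heps; exact (H (mkposreal eps Heps)).
  - intros H eps; exact (H eps (cond_pos eps)).
Qed.

Lemma Clim_seq_unique (u : nat -> C) (l l' : C) : Clim_seq u l -> Clim_seq u l' -> l = l'.
Proof. exact (@filterlim_locally_unique nat C_AbsRing C_NormedModule eventually _ u l l'). Qed.

Lemma lim_seq_Cplus (u v : nat -> C) (a b : C) :
  Clim_seq u a -> Clim_seq v b -> Clim_seq (fun n => u n + v n) (a + b).
Proof. intros Hu Hv; exact (filterlim_comp_2 _ _ _ Hu Hv (@filterlim_plus _ C_NormedModule a b)). Qed.

(* [filterlim_mult] is stated for the uniform structure of [C_AbsRing], not for
   [C_UniformSpace]; both are generated by [Cmod]-balls. *)
Lemma Clim_seq_AbsRing (u : nat -> C) (l : C) :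
  Clim_seq u l <-> filterlim u eventually (@locally (AbsRing_UniformSpace C_AbsRing) l).
Proof.
  split; intro H.
  - apply (proj2 (@filterlim_locally_ball_norm C_AbsRing nat (AbsRing_NormedModule C_AbsRing) _ _ _ _)).
    intro eps; exact (proj1 (@filterlim_locally_ball_norm C_AbsRing nat C_NormedModule _ _ _ _) H eps).
  - apply (proj2 (@filterlim_locally_ball_norm C_AbsRing nat C_NormedModule _ _ _ _)).
    intro eps; exact (proj1 (@filterlim_locally_ball_norm C_AbsRing nat (AbsRing_NormedModule C_AbsRing) _ _ _ _) H eps).
Qed.

Lemma lim_seq_Cmult (u v : nat -> C) (a b : C) :
  Clim_seq u a -> Clim_seq v b -> Clim_seq (fun n => u n * v n) (a * b).
Proof.
  rewrite !Clim_seq_AbsRing; intros Hu Hv.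
  exact (filterlim_comp_2 _ _ _ Hu Hv (@filterlim_mult C_AbsRing a b)).
Qed.

Lemma lim_seq_Cminus (u v : nat -> C) (a b : C) :
  Clim_seq u a -> Clim_seq v b -> Clim_seq (fun n => u n - v n) (a - b).
Proof.
  intros Hu Hv; apply lim_seq_Cplus; auto.
  eapply filterlim_comp; [exact Hv | exact (@filterlim_opp _ C_NormedModule b)].
Qed.

Lemma lim_seq_shift (u : nat -> C) (l : C) (J : nat) :
  Clim_seq (fun n => u (n + J)%nat) l -> Clim_seq u l.
Proof.
  intros H P HP; destruct (H P HP) as [N HN]; exists (N + J)%nat; intros n Hn.
  replace n with (n - J + J)%nat by lia; apply HN; lia.
Qed.

Lemma lim_seq_RtoC (u : nat -> R) (l : R) : is_lim_seq u l -> Clim_seq (fun n => RtoC (u n)) l.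
Proof.
  intro H; apply Clim_seq_spec; intros eps Heps.
  apply is_lim_seq_spec in H; destruct (H (mkposreal eps Heps)) as [N HN].
  exists N; intros n Hn; rewrite <- RtoC_minus, Cmod_R; apply HN; lia.
Qed.

Lemma lim_seq_Cmod_le (u : nat -> C) (l : C) (B : R) :
  Clim_seq u l -> eventually (fun n => Cmod (u n) <= B)%R -> (Cmod l <= B)%R.
Proof.
  intros Hu HB.
  assert (H : is_lim_seq (fun n => Cmod (u n)) (Cmod l)).
  { eapply filterlim_comp; [exact Hu | exact (@filterlim_norm _ C_NormedModule l)]. }
  exact (is_lim_seq_le_loc _ _ _ _ HB H (is_lim_seq_const B)).
Qed.

Lemma eventually_Cmod_le_lim (u : nat -> C) (l : C) :
  Clim_seq u l -> eventually (fun n => Cmod (u n) <= Cmod l + 1)%R.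
Proof.
  intro H; destruct (proj1 (Clim_seq_spec u l) H 1%R ltac:(lra)) as [N HN]; exists N; intros n Hn.
  pose proof (Cmod_triangle l (u n - l)) as Ht; replace (l + (u n - l)) with (u n) in Ht by ring.
  specialize (HN n Hn); lra.
Qed.

Lemma eventually_INR_gt (M : R) : eventually (fun n => M < INR n)%R.
Proof.
  destruct (INR_unbounded M) as [N HN]; exists N; intros n Hn.
  apply le_INR in Hn; lra.
Qed.

Lemma lim_seq_ratio_1 (a b : C) :
  Clim_seq (fun m => (RtoC (INR m) + a) / (RtoC (INR m) + b)) 1.
Proof.
  apply Clim_seq_spec; intros eps Heps.
  destruct (eventually_INR_gt (2 * Cmod b + 2 * Cmod (a - b) / eps)) as [N HN].
  exists N; intros n Hn; specialize (HN n Hn).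
  pose proof (Cmod_ge_0 b); pose proof (Cmod_ge_0 (a - b)).
  assert (0 <= 2 * Cmod (a - b) / eps)%R by (apply Rmult_le_pos; [lra | left; apply Rinv_0_lt_compat; lra]).
  assert (Hnb : (INR n / 2 <= Cmod (RtoC (INR n) + b))%R).
  { pose proof (Cmod_triangle (RtoC (INR n) + b) (- b)) as H2.
    replace (RtoC (INR n) + b + - b) with (RtoC (INR n)) in H2 by ring.
    rewrite Cmod_opp, Cmod_R, Rabs_right in H2 by (apply Rle_ge, pos_INR); lra. }
  assert (Hnz : RtoC (INR n) + b <> 0) by (apply Cmod_neq0; lra).
  replace ((RtoC (INR n) + a) / (RtoC (INR n) + b) - 1) with ((a - b) / (RtoC (INR n) + b))
    by (field; auto).
  rewrite Cmod_div by auto.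
  apply (Rle_lt_trans _ (2 * Cmod (a - b) / INR n)).
  - replace (2 * Cmod (a - b) / INR n)%R with (Cmod (a - b) / (INR n / 2))%R by (field; lra).
    unfold Rdiv; apply Rmult_le_compat_l; auto; apply Rinv_le_contravar; lra.
  - apply (Rmult_lt_reg_r (INR n / eps)); [apply Rdiv_lt_0_compat; lra|].
    replace (2 * Cmod (a - b) / INR n * (INR n / eps))%R with (2 * Cmod (a - b) / eps)%R by (field; lra).
    replace (eps * (INR n / eps))%R with (INR n) by (field; lra); lra.
Qed.

Fixpoint rsum (f : nat -> R) (n : nat) : R :=
  match n with O => 0%R | S m => (rsum f m + f m)%R end.

Lemma csum_ext (f g : nat -> C) (n : nat) :
  (forall k, (k < n)%nat -> f k = g k) -> csum f n = csum g n.
Proof. induction n; simpl; intros H; auto; rewrite IHn, H; auto. Qed.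

Lemma cprod_ext (f g : nat -> C) (n : nat) :
  (forall k, (k < n)%nat -> f k = g k) -> cprod f n = cprod g n.
Proof. induction n; simpl; intros H; auto; rewrite IHn, H; auto. Qed.

Lemma csum_Sl (f : nat -> C) (n : nat) : csum f (S n) = f O + csum (fun k => f (S k)) n.
Proof. induction n; simpl in *; [ring | rewrite IHn; ring]. Qed.

Lemma cprod_Sl (f : nat -> C) (n : nat) : cprod f (S n) = f O * cprod (fun k => f (S k)) n.
Proof. induction n; simpl in *; [ring | rewrite IHn; ring]. Qed.

Lemma csum_mult_l (c : C) (f : nat -> C) (n : nat) : csum (fun k => c * f k) n = c * csum f n.
Proof. induction n; simpl; [ring | rewrite IHn; ring]. Qed.

Lemma csum_plus (f g : nat -> C) (n : nat) : csum (fun k => f k + g k) n = csum f n + csum g n.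
Proof. induction n; simpl; [ring | rewrite IHn; ring]. Qed.

Lemma csum_minus (f g : nat -> C) (n : nat) : csum (fun k => f k - g k) n = csum f n - csum g n.
Proof. induction n; simpl; [ring | rewrite IHn; ring]. Qed.

Lemma csum_rev (f : nat -> C) (n : nat) : csum (fun j => f (n - S j)%nat) n = csum f n.
Proof.
  induction n; auto.
  rewrite csum_Sl; cbn [csum]; rewrite <- IHn.
  replace (S n - 1)%nat with n by lia; apply Cplus_comm.
Qed.

Lemma cprod_mult (f g : nat -> C) (n : nat) : cprod (fun k => f k * g k) n = cprod f n * cprod g n.
Proof. induction n; simpl; [ring | rewrite IHn; ring]. Qed.

Lemma cprod_neq0 (f : nat -> C) (n : nat) : (forall k, (k < n)%nat -> f k <> 0) -> cprod f n <> 0.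
Proof.
  induction n; simpl; intros H; [apply C1_nz|].
  apply Cmult_neq_0; [apply IHn; intros | ]; apply H; lia.
Qed.

Lemma cprod_inv (f : nat -> C) (n : nat) :
  (forall k, (k < n)%nat -> f k <> 0) -> cprod (fun k => / f k) n = / cprod f n.
Proof.
  induction n; simpl; intros H; [field; apply C1_nz|].
  rewrite IHn by (intros; apply H; lia).
  field; split; [apply H; lia | apply cprod_neq0; intros; apply H; lia].
Qed.

Lemma cprod_add (f : nat -> C) (J n : nat) :
  cprod f (n + J) = cprod f J * cprod (fun j => f (j + J)%nat) n.
Proof. induction n; simpl; [ring | rewrite IHn; ring]. Qed.

Lemma csum_RtoC (f : nat -> R) (n : nat) : csum (fun k => RtoC (f k)) n = RtoC (rsum f n).
Proof. induction n; simpl; auto; rewrite IHn, RtoC_plus; auto. Qed.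

Lemma cexp_csum (f : nat -> C) (n : nat) : cexp (csum f n) = cprod (fun k => cexp (f k)) n.
Proof. induction n; simpl; [apply cexp_0 | rewrite cexp_add, IHn; auto]. Qed.

Lemma rsum_le (f g : nat -> R) (n : nat) :
  (forall k, (k < n)%nat -> f k <= g k)%R -> (rsum f n <= rsum g n)%R.
Proof.
  induction n; simpl; intros H; [lra|].
  pose proof (H n ltac:(lia)); pose proof (IHn ltac:(intros; apply H; lia)); lra.
Qed.

Lemma rsum_nonneg (f : nat -> R) (n : nat) : (forall k, 0 <= f k)%R -> (0 <= rsum f n)%R.
Proof. induction n; simpl; intros H; [lra|]; specialize (IHn H); specialize (H n); lra. Qed.

Lemma rsum_mult_l (c : R) (f : nat -> R) (n : nat) : rsum (fun j => c * f j)%R n = (c * rsum f n)%R.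
Proof. induction n; simpl; [ring | rewrite IHn; ring]. Qed.

Lemma rsum_telescope (f : nat -> R) (n : nat) : rsum (fun j => f (S j) - f j)%R n = (f n - f O)%R.
Proof. induction n; simpl; [ring | rewrite IHn; ring]. Qed.

(** * Convergent infinite products *)

Lemma Cmod_le_exp_Cmod_sub_1 (a : C) : (Cmod a <= exp (Cmod (a - 1)))%R.
Proof.
  pose proof (Cmod_triangle 1 (a - 1)) as H; replace (1 + (a - 1)) with a in H by ring.
  rewrite Cmod_1 in H; pose proof (exp_ineq1_le (Cmod (a - 1))); lra.
Qed.

Lemma Cmod_cprod_le (a : nat -> C) (n : nat) :
  (Cmod (cprod a n) <= exp (rsum (fun j => Cmod (a j - 1)) n))%R.
Proof.
  induction n; simpl; [rewrite Cmod_1, exp_0; lra|].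
  rewrite Cmod_mult, exp_plus.
  apply Rmult_le_compat; auto using Cmod_ge_0, Cmod_le_exp_Cmod_sub_1.
Qed.

Lemma Cmod_cprod_sub_1_le (a : nat -> C) (n : nat) :
  (Cmod (cprod a n - 1) <= exp (rsum (fun j => Cmod (a j - 1)) n) - 1)%R.
Proof.
  induction n; simpl; [rewrite exp_0; replace (1 - 1) with (RtoC 0) by ring; rewrite Cmod_0; lra|].
  set (S0 := rsum (fun j => Cmod (a j - 1)) n) in *.
  replace (cprod a n * a n - 1) with ((cprod a n - 1) * a n + (a n - 1)) by ring.
  eapply Rle_trans; [apply Cmod_triangle|]; rewrite Cmod_mult, exp_plus.
  pose proof (Cmod_le_exp_Cmod_sub_1 (a n)); pose proof (exp_ineq1_le (Cmod (a n - 1))).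
  pose proof (Cmod_ge_0 (cprod a n - 1)); pose proof (Cmod_ge_0 (a n)).
  assert (Cmod (cprod a n - 1) * Cmod (a n) <= (exp S0 - 1) * exp (Cmod (a n - 1)))%R
    by (apply Rmult_le_compat; auto).
  pose proof (exp_pos S0); nra.
Qed.

Section Telescoping.
Local Open Scope R_scope.

Definition tel (j : nat) : R := / INR (S j) - / INR (S (S j)).

Lemma tel_eq (j : nat) : tel j = / (INR (S j) * INR (S (S j))).
Proof. unfold tel; rewrite (S_INR (S j)); pose proof (INR_S_pos j); field; lra. Qed.

Lemma tel_pos (j : nat) : 0 < tel j.
Proof. rewrite tel_eq; apply Rinv_0_lt_compat, Rmult_lt_0_compat; apply INR_S_pos. Qed.

Lemma tel_le_inv (j : nat) : tel j <= / INR (S j).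
Proof. unfold tel; pose proof (Rinv_0_lt_compat _ (INR_S_pos (S j))); lra. Qed.

Lemma tel_add_le (j J : nat) : tel (j + J) <= tel j.
Proof.
  rewrite !tel_eq; apply Rinv_le_contravar.
  - apply Rmult_lt_0_compat; apply INR_S_pos.
  - apply Rmult_le_compat; try (left; apply INR_S_pos); apply le_INR; lia.
Qed.

Lemma Rsqr_inv_le_tel (j : nat) : (/ INR (S j)) ^ 2 <= 2 * tel j.
Proof.
  rewrite tel_eq, (S_INR (S j)); pose proof (INR_S_pos j).
  assert (1 <= INR (S j)) by (rewrite S_INR; pose proof (pos_INR j); lra).
  replace ((/ INR (S j)) ^ 2) with (/ (INR (S j) * INR (S j))) by (field; lra).
  replace (2 * / (INR (S j) * (INR (S j) + 1))) with (/ (INR (S j) * ((INR (S j) + 1) / 2)))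
    by (field; lra).
  apply Rinv_le_contravar; [apply Rmult_lt_0_compat; lra | apply Rmult_le_compat_l; lra].
Qed.

Lemma rsum_tel (n : nat) : rsum tel n = 1 - / INR (S n).
Proof.
  induction n; simpl rsum; [simpl; rewrite Rinv_1; ring | rewrite IHn; unfold tel; ring].
Qed.

Lemma rsum_tel_le (n : nat) : rsum tel n <= 1.
Proof. rewrite rsum_tel; pose proof (Rinv_0_lt_compat _ (INR_S_pos n)); lra. Qed.

Lemma ex_series_tel : ex_series tel.
Proof.
  exists 1; change (is_lim_seq (sum_n tel) 1).
  apply (is_lim_seq_ext (fun n => 1 - / INR (S (S n)))).
  { intro n; rewrite <- rsum_tel.
    induction n; [rewrite sum_O; simpl; ring | rewrite sum_Sn, <- IHn; reflexivity]. }
  replace 1 with (1 - 0) at 1 by ring; apply is_lim_seq_minus'; [apply is_lim_seq_const|].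
  apply (is_lim_seq_ext (fun n => / INR (n + 2))); [intro n; do 2 f_equal; lia|].
  apply (is_lim_seq_incr_n (fun n => / INR n)).
  replace (Finite 0) with (Rbar_inv p_infty) by reflexivity.
  apply is_lim_seq_inv; [apply is_lim_seq_INR | discriminate].
Qed.

End Telescoping.

Lemma lim_cprod_of_tel_bound (a : nat -> C) (E : R) : (0 <= E)%R ->
  (forall j, (Cmod (a j - 1) <= E * tel j)%R) -> exists l, Clim_seq (cprod a) l.
Proof.
  intros HE Ha.
  set (d := fun n => cprod a (S n) - cprod a n).
  assert (Hd : forall n, (@norm C_AbsRing C_CompleteNormedModule (d n) <= exp E * E * tel n)%R).
  { intro n; change (Cmod (cprod a n * a n - cprod a n) <= exp E * E * tel n)%R.
    replace (cprod a n * a n - cprod a n) with (cprod a n * (a n - 1)) by ring.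
    assert (Hsum : (rsum (fun j => Cmod (a j - 1)) n <= E)%R).
    { eapply Rle_trans; [apply (rsum_le _ (fun j => E * tel j)%R); intros; apply Ha|].
      rewrite rsum_mult_l; pose proof (rsum_tel_le n); nra. }
    rewrite Cmod_mult, Rmult_assoc; apply Rmult_le_compat; auto using Cmod_ge_0.
    eapply Rle_trans; [apply Cmod_cprod_le | apply exp_le_compat, Hsum]. }
  destruct (ex_series_le d _ Hd (ex_series_scal_l _ _ ex_series_tel)) as [L HL].
  exists (L + 1); apply (lim_seq_shift _ _ 1).
  apply (filterlim_ext (fun n => sum_n d n + 1)).
  { intro n; rewrite Nat.add_1_r; induction n.
    - rewrite sum_O; unfold d; simpl; ring.
    - rewrite sum_Sn; change (sum_n d n + d (S n) + 1 = cprod a (S (S n))).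
      unfold d at 2; rewrite <- IHn; ring. }
  apply lim_seq_Cplus; [exact HL | apply filterlim_const].
Qed.

Lemma Cmod_inv_sub_1_le (a : C) : (Cmod (a - 1) <= / 2)%R ->
  a <> 0 /\ (Cmod (/ a - 1) <= 2 * Cmod (a - 1))%R.
Proof.
  intro H; pose proof (Cmod_1_add_ge (a - 1) H) as Ha; replace (1 + (a - 1)) with a in Ha by ring.
  assert (Hnz : a <> 0) by (apply Cmod_neq0; lra).
  split; auto.
  replace (/ a - 1) with (- (a - 1) / a) by (field; auto).
  rewrite Cmod_div, Cmod_opp by auto; pose proof (Cmod_ge_0 (a - 1)).
  unfold Rdiv; rewrite Rmult_comm; apply Rmult_le_compat_r; auto.
  rewrite <- (Rinv_inv 2); apply Rinv_le_contravar; lra.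
Qed.

Lemma lim_cprod_neq0_of_tel_bound (a : nat -> C) (E : R) : (0 <= E)%R ->
  (forall j, (Cmod (a j - 1) <= E * tel j)%R) -> (forall j, (Cmod (a j - 1) <= / 2)%R) ->
  exists l : C, l <> 0 /\ Clim_seq (cprod a) l.
Proof.
  intros HE Ha Ha2.
  (* The inverse factors obey the same kind of bound, and the two products multiply to 1. *)
  assert (Hinv : forall j, a j <> 0 /\ (Cmod (/ a j - 1) <= 2 * E * tel j)%R).
  { intro j; destruct (Cmod_inv_sub_1_le _ (Ha2 j)) as [Hnz Hle]; specialize (Ha j); split; auto; lra. }
  destruct (lim_cprod_of_tel_bound a E HE Ha) as [l Hl].
  destruct (lim_cprod_of_tel_bound (fun j => / a j) (2 * E) ltac:(lra) (fun j => proj2 (Hinv j)))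
    as [l' Hl'].
  exists l; split; auto; intros ->.
  assert (H1 : Clim_seq (fun n => cprod a n * cprod (fun j => / a j) n) 1).
  { apply (filterlim_ext (fun _ => RtoC 1)); [|apply filterlim_const].
    intro n; rewrite <- cprod_mult; induction n; simpl; auto.
    rewrite <- IHn, Cinv_r by apply Hinv; ring. }
  apply C1_nz, (Clim_seq_unique _ _ _ H1).
  rewrite <- (Cmult_0_l l'); apply lim_seq_Cmult; auto.
Qed.

Lemma lim_cprod_shift (a : nat -> C) (J : nat) (l : C) :
  Clim_seq (cprod (fun j => a (j + J)%nat)) l -> Clim_seq (cprod a) (cprod a J * l).
Proof.
  intro H; apply (lim_seq_shift _ _ J).
  apply (filterlim_ext (fun n => cprod a J * cprod (fun j => a (j + J)%nat) n)).
  { intro n; rewrite cprod_add; auto. }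
  apply lim_seq_Cmult; auto; apply filterlim_const.
Qed.

Lemma lim_cprod_neq0_of_eventual_tel_bound (a : nat -> C) (E : R) (J : nat) : (0 <= E)%R ->
  (forall j, a j <> 0) -> (forall j, (J <= j)%nat -> (Cmod (a j - 1) <= E * tel j)%R) ->
  exists l : C, l <> 0 /\ Clim_seq (cprod a) l.
Proof.
  intros HE Hnz Ha.
  destruct (eventually_INR_gt (2 * E)) as [N HN].
  set (J' := (J + N)%nat).
  assert (Hb : forall j : nat, (Cmod (a (j + J')%nat - 1) <= E * tel j)%R /\ (Cmod (a (j + J')%nat - 1) <= / 2)%R).
  { intro j; specialize (Ha (j + J')%nat ltac:(unfold J'; lia)).
    pose proof (tel_add_le j J'); pose proof (tel_le_inv (j + J')); pose proof (tel_pos j).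
    pose proof (INR_S_pos (j + J')) as Hpos.
    assert (2 * E < INR (S (j + J')))%R by (apply HN; unfold J'; lia).
    split; [nra|].
    assert (E * / INR (S (j + J')) <= / 2)%R.
    { apply (Rmult_le_reg_r (INR (S (j + J')))); auto.
      rewrite Rmult_assoc, Rinv_l by lra; lra. }
    pose proof (tel_pos (j + J')); nra. }
  destruct (lim_cprod_neq0_of_tel_bound (fun j => a (j + J')%nat) E HE
    (fun j => proj1 (Hb j)) (fun j => proj2 (Hb j))) as [l [Hl Hlim]].
  exists (cprod a J' * l); split; [apply Cmult_neq_0; auto; apply cprod_neq0; auto|].
  apply lim_cprod_shift; auto.
Qed.

(** * Gauss's product for the Gamma function *)

Lemma Cmod_cexp_div_sub_1_le (w b : C) : (Cmod w <= / 2)%R -> (Cmod b <= / 2)%R ->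
  (Cmod (cexp w / (1 + b) - 1) <= 2 * (3 * Cmod w ^ 2 + Cmod (w - b)))%R.
Proof.
  intros Hw Hb; pose proof (Cmod_1_add_ge b Hb) as Hden.
  assert (Hnz : 1 + b <> 0) by (apply Cmod_neq0; lra).
  replace (cexp w / (1 + b) - 1) with (((cexp w - 1 - w) + (w - b)) / (1 + b)) by (field; auto).
  rewrite Cmod_div by auto.
  pose proof (Cmod_triangle (cexp w - 1 - w) (w - b)); pose proof (Cmod_cexp_sub_1_sub_le w Hw).
  pose proof (Cmod_ge_0 (cexp w - 1 - w + (w - b))).
  unfold Rdiv; apply (Rle_trans _ (Cmod (cexp w - 1 - w + (w - b)) * 2)); [|lra].
  apply Rmult_le_compat_l; auto; rewrite <- (Rinv_inv 2); apply Rinv_le_contravar; lra.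
Qed.

Section Logarithm_bounds.
Local Open Scope R_scope.

Lemma ln_1_add_le (x : R) : -1 < x -> ln (1 + x) <= x.
Proof.
  intro H; apply Rnot_lt_le; intro H'; apply exp_increasing in H'.
  rewrite exp_ln in H' by lra; pose proof (exp_ineq1_le x); lra.
Qed.

Lemma ln_1_add_between (t : R) : 0 < t -> t / (1 + t) <= ln (1 + t) <= t.
Proof.
  intro Ht; split; [|apply ln_1_add_le; lra].
  assert (Hlt : t / (1 + t) < 1)
    by (apply (Rmult_lt_reg_r (1 + t)); [lra|]; unfold Rdiv; rewrite Rmult_assoc, Rinv_l by lra; lra).
  pose proof (ln_1_add_le (- (t / (1 + t))) ltac:(lra)) as H.
  replace (1 + - (t / (1 + t))) with (/ (1 + t)) in H by (field; lra).
  rewrite ln_Rinv in H by lra; lra.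
Qed.

Lemma ln_S_sub_ln (j : nat) : ln (INR (S (S j))) - ln (INR (S j)) = ln (1 + / INR (S j)).
Proof.
  pose proof (INR_S_pos j); pose proof (INR_S_pos (S j)); unfold Rminus.
  rewrite <- ln_Rinv, <- ln_mult by auto using Rinv_0_lt_compat.
  f_equal; rewrite (S_INR (S j)); field; lra.
Qed.

End Logarithm_bounds.

Definition nonpole (z : C) : Prop := forall m : nat, z + RtoC (INR m) <> 0.

Lemma nonpole_neq0 (z : C) : nonpole z -> z <> 0.
Proof. intros H; specialize (H O); simpl in H; rewrite Cplus_0_r in H; auto. Qed.

Lemma nonpole_add_nat (z : C) (k : nat) : nonpole z -> nonpole (z + RtoC (INR k)).
Proof.
  intros H m; replace (z + RtoC (INR k) + RtoC (INR m)) with (z + RtoC (INR (k + m)))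
    by (rewrite plus_INR, RtoC_plus; ring); apply H.
Qed.

Lemma nonpole_add_1 (z : C) : nonpole z -> nonpole (z + 1).
Proof. intro H; exact (nonpole_add_nat z 1 H). Qed.

Lemma nonpole_of_not_negint (z : C) : not_negint z -> z <> 0 -> nonpole z.
Proof.
  intros H1 H2 [|m]; [simpl; rewrite Cplus_0_r; auto|].
  intro H; apply (H1 m); replace z with (z + RtoC (INR (S m)) - RtoC (INR (S m))) by ring.
  rewrite H; ring.
Qed.

Lemma nonpole_add_1_of_not_negint (z : C) : not_negint z -> nonpole (z + 1).
Proof.
  intros H m Hm; apply (H m).
  replace z with (z + 1 + RtoC (INR m) - RtoC (INR (S m))) by (rewrite S_INR, RtoC_plus; ring).
  rewrite Hm; ring.
Qed.

Definition gauss_factor (z : C) (j : nat) : C :=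
  cexp (z * RtoC (ln (INR (S (S j))) - ln (INR (S j)))) / (1 + z / RtoC (INR (S j))).

Lemma one_add_div_INR_S (z : C) (j : nat) : 1 + z / RtoC (INR (S j)) = (z + RtoC (INR (S j))) / RtoC (INR (S j)).
Proof. field; apply RtoC_neq0, INR_S_pos. Qed.

Lemma gauss_factor_neq0 (z : C) (j : nat) : nonpole z -> gauss_factor z j <> 0.
Proof.
  intro Hz; unfold gauss_factor; rewrite one_add_div_INR_S; unfold Cdiv.
  apply Cmult_neq_0; [apply cexp_neq0|].
  apply Cinv_neq0, Cmult_neq_0; [apply Hz | apply Cinv_neq0, RtoC_neq0, INR_S_pos].
Qed.

Lemma cprod_gauss_factor (z : C) (m : nat) : nonpole z ->
  cprod (gauss_factor z) m = cexp (z * RtoC (ln (INR (S m)))) * RtoC (INR (fact m))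
    / cprod (fun j => z + RtoC (INR (S j))) m.
Proof.
  intro Hz; induction m.
  - simpl; rewrite ln_1, Cmult_0_r, cexp_0; field; apply C1_nz.
  - cbn [cprod]; rewrite IHm; unfold gauss_factor; rewrite one_add_div_INR_S.
    assert (cprod (fun j => z + RtoC (INR (S j))) m <> 0) by (apply cprod_neq0; intros; apply Hz).
    pose proof (Hz (S m)); pose proof (RtoC_neq0 _ (INR_S_pos m)).
    rewrite fact_simpl, mult_INR, RtoC_mult.
    replace (cexp (z * RtoC (ln (INR (S (S m))))))
      with (cexp (z * RtoC (ln (INR (S m)))) * cexp (z * RtoC (ln (INR (S (S m))) - ln (INR (S m)))))
      by (rewrite <- cexp_add; f_equal; rewrite RtoC_minus; ring).
    field; auto.
Qed.

Lemma gauss_seq_S (z : C) (m : nat) : nonpole z ->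
  gauss_seq z (S m) = cprod (gauss_factor z) m * (RtoC (INR (S m)) / (z * (z + RtoC (INR (S m))))).
Proof.
  intro Hz; rewrite cprod_gauss_factor by auto; unfold gauss_seq; rewrite rpowC_cexp.
  rewrite cprod_Sl; cbn [cprod]; rewrite Cplus_0_r.
  assert (cprod (fun j => z + RtoC (INR (S j))) m <> 0) by (apply cprod_neq0; intros; apply Hz).
  pose proof (Hz (S m)); pose proof (nonpole_neq0 z Hz).
  rewrite fact_simpl, mult_INR, RtoC_mult.
  replace (z * RtoC (ln (INR (S m)))) with (RtoC (ln (INR (S m))) * z) by ring.
  field; auto.
Qed.

Lemma Cmod_gauss_factor_sub_1_le (z : C) (j : nat) : (2 * Cmod z <= INR (S j))%R ->
  (Cmod (gauss_factor z j - 1) <= 4 * (3 * Cmod z ^ 2 + Cmod z) * tel j)%R.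
Proof.
  intro Hj; pose proof (INR_S_pos j) as HN; pose proof (Cmod_ge_0 z).
  set (t := (/ INR (S j))%R).
  assert (Ht : (0 < t)%R) by (apply Rinv_0_lt_compat; auto).
  assert (Hzt : (Cmod z * t <= / 2)%R).
  { apply (Rmult_le_reg_r (INR (S j))); auto; unfold t; rewrite Rmult_assoc, Rinv_l; lra. }
  set (l := ln (1 + t)); destruct (ln_1_add_between t Ht) as [L1 L2]; fold l in L1, L2.
  assert (Htl : (t - l <= t ^ 2)%R).
  { assert (t - t / (1 + t) = t ^ 2 / (1 + t))%R by (field; lra).
    assert (t ^ 2 / (1 + t) <= t ^ 2)%R.
    { unfold Rdiv; rewrite <- (Rmult_1_r (t ^ 2)) at 2; apply Rmult_le_compat_l; [nra|].
      rewrite <- Rinv_1; apply Rinv_le_contravar; lra. }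
    lra. }
  assert (Hl0 : (0 <= l)%R) by (pose proof (Rdiv_lt_0_compat t (1 + t) Ht ltac:(lra)); lra).
  unfold gauss_factor; rewrite ln_S_sub_ln; fold t l.
  replace (z / RtoC (INR (S j))) with (z * RtoC t) by (unfold t; rewrite RtoC_inv by lra; auto).
  eapply Rle_trans; [apply Cmod_cexp_div_sub_1_le|];
    rewrite ?Cmod_mult, ?Cmod_RtoC_nonneg by lra; try nra.
  replace (z * RtoC l - z * RtoC t) with (z * RtoC (l - t)) by (rewrite RtoC_minus; ring).
  rewrite Cmod_mult, Cmod_R, Rabs_left1 by lra.
  pose proof (Rsqr_inv_le_tel j) as Htel; fold t in Htel.
  assert ((Cmod z * l) ^ 2 <= Cmod z ^ 2 * t ^ 2)%R.
  { rewrite Rpow_mult_distr; apply Rmult_le_compat_l; [apply pow2_ge_0 | apply pow_incr; lra]. }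
  assert (Cmod z * - (l - t) <= Cmod z * t ^ 2)%R by (apply Rmult_le_compat_l; lra).
  assert (0 <= 3 * Cmod z ^ 2 + Cmod z)%R by nra.
  nra.
Qed.

Lemma lim_gauss_seq_neq0 (z : C) : nonpole z ->
  exists l : C, l <> 0 /\ Clim_seq (gauss_seq z) l.
Proof.
  intro Hz; pose proof (Cmod_ge_0 z).
  destruct (eventually_INR_gt (2 * Cmod z)) as [J HJ].
  destruct (lim_cprod_neq0_of_eventual_tel_bound (gauss_factor z) (4 * (3 * Cmod z ^ 2 + Cmod z)) J)
    as [l [Hl Hlim]].
  - nra.
  - intro j; apply gauss_factor_neq0, Hz.
  - intros j Hj; apply Cmod_gauss_factor_sub_1_le.
    assert (2 * Cmod z < INR j)%R by (apply HJ; lia); rewrite S_INR; lra.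
  - exists (l * (/ z * 1)); split.
    { apply Cmult_neq_0; auto; rewrite Cmult_1_r; apply Cinv_neq0, nonpole_neq0, Hz. }
    apply (lim_seq_shift _ _ 1).
    apply (filterlim_ext (fun m => cprod (gauss_factor z) m
      * (/ z * ((RtoC (INR m) + 1) / (RtoC (INR m) + (z + 1)))))).
    { intro m; rewrite Nat.add_1_r, gauss_seq_S by auto; f_equal.
      pose proof (Hz (S m)) as Hm; pose proof (nonpole_neq0 z Hz); rewrite S_INR, RtoC_plus in *.
      assert (RtoC (INR m) + (z + 1) <> 0) by (intro E; apply Hm; rewrite <- E; ring).
      field; auto. }
    apply lim_seq_Cmult; auto; apply lim_seq_Cmult; [apply filterlim_const | apply lim_seq_ratio_1].
Qed.

Lemma lim_gauss_seq_CGamma (z : C) : nonpole z -> Clim_seq (gauss_seq z) (CGamma z).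
Proof.
  intro Hz; destruct (lim_gauss_seq_neq0 z Hz) as [l [_ Hl]].
  unfold CGamma; apply (epsilon_spec (inhabits (RtoC 0))
    (fun l0 : C => filterlim (gauss_seq z) eventually (locally l0))); exists l; auto.
Qed.

Lemma CGamma_neq0 (z : C) : nonpole z -> CGamma z <> 0.
Proof.
  intro Hz; destruct (lim_gauss_seq_neq0 z Hz) as [l [Hl Hlim]].
  rewrite (Clim_seq_unique _ _ _ (lim_gauss_seq_CGamma z Hz) Hlim); auto.
Qed.

Lemma gauss_seq_add_1 (z : C) (m : nat) : nonpole z -> (0 < m)%nat ->
  gauss_seq (z + 1) m = gauss_seq z m * (z * ((RtoC (INR m) + 0) / (RtoC (INR m) + (z + 1)))).
Proof.
  intros Hz Hm; pose proof (lt_0_INR _ Hm).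
  unfold gauss_seq; rewrite !rpowC_cexp.
  replace ((z + 1) * RtoC (ln (INR m))) with (z * RtoC (ln (INR m)) + RtoC (ln (INR m))) by ring.
  rewrite cexp_add, cexp_RtoC, exp_ln by auto.
  assert (E : cprod (fun j => z + RtoC (INR j)) (S m) * (z + RtoC (INR (S m))) =
              z * cprod (fun j => z + 1 + RtoC (INR j)) (S m)).
  { change (cprod (fun j => z + RtoC (INR j)) (S (S m)) = z * cprod (fun j => z + 1 + RtoC (INR j)) (S m)).
    rewrite cprod_Sl, Cplus_0_r; f_equal.
    apply cprod_ext; intros; rewrite S_INR, RtoC_plus; ring. }
  assert (cprod (fun j => z + RtoC (INR j)) (S m) <> 0) by (apply cprod_neq0; intros; apply Hz).
  pose proof (Hz (S m)) as HSm; pose proof (nonpole_neq0 z Hz).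
  replace (cprod (fun j => z + 1 + RtoC (INR j)) (S m))
    with (cprod (fun j => z + RtoC (INR j)) (S m) * (z + RtoC (INR (S m))) / z) by (rewrite E; field; auto).
  rewrite S_INR, RtoC_plus in *.
  assert (RtoC (INR m) + (z + 1) <> 0) by (intro E'; apply HSm; rewrite <- E'; ring).
  field; repeat split; auto.
Qed.

Lemma CGamma_add_1 (z : C) : nonpole z -> CGamma (z + 1) = z * CGamma z.
Proof.
  intro Hz; apply (Clim_seq_unique (gauss_seq (z + 1))).
  - apply lim_gauss_seq_CGamma, nonpole_add_1, Hz.
  - replace (z * CGamma z) with (CGamma z * (z * 1)) by ring.
    apply (filterlim_ext_loc (fun m => gauss_seq z m * (z * ((RtoC (INR m) + 0) / (RtoC (INR m) + (z + 1)))))).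
    { exists 1%nat; intros m Hm; rewrite gauss_seq_add_1; auto. }
    apply lim_seq_Cmult; [apply lim_gauss_seq_CGamma, Hz|].
    apply lim_seq_Cmult; [apply filterlim_const | apply lim_seq_ratio_1].
Qed.

(** * The binomial-harmonic identity *)

Lemma CGamma_add_INR_S (z : C) (k : nat) : nonpole z ->
  CGamma (z + RtoC (INR (S k))) = (z + RtoC (INR k)) * CGamma (z + RtoC (INR k)).
Proof.
  intro Hz; rewrite RtoC_INR_S, Cplus_assoc.
  apply CGamma_add_1, nonpole_add_nat, Hz.
Qed.

Lemma csum_harmonic_by_parts (a : nat -> C) (n : nat) :
  csum (fun k => Hn (n - 1 - k) * (a k - a (S k))) n =
  Hn n * a O - csum (fun j => a (n - S j)%nat / RtoC (INR (S j))) n.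
Proof.
  revert a; induction n; intro a; [unfold Hn; simpl; ring|].
  rewrite csum_Sl; replace (S n - 1 - 0)%nat with n by lia.
  rewrite (csum_ext _ (fun k => Hn (n - 1 - k) * (a (S k) - a (S (S k)))))
    by (intros k Hk; replace (S n - 1 - S k)%nat with (n - 1 - k)%nat by lia; auto).
  rewrite (IHn (fun k => a (S k))); cbn [csum].
  rewrite (csum_ext (fun j => a (S n - S j)%nat / _) (fun j => a (S (n - S j)) / RtoC (INR (S j))))
    by (intros j Hj; replace (S n - S j)%nat with (S (n - S j)) by lia; auto).
  replace (S n - S n)%nat with O by lia.
  change (Hn (S n)) with (Hn n + / RtoC (INR (S n))).
  pose proof (RtoC_neq0 _ (INR_S_pos n)); field; auto.
Qed.

Section Binomial_harmonic_sum.

Variables r s : C.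
Hypothesis Hs : nonpole s.
Hypothesis Hr : nonpole (r + 1).
Hypothesis Hrs : nonpole (r - s + 1).

Definition gamma_ratio (k : nat) : C := CGamma (s + RtoC (INR k)) / CGamma (r + 1 + RtoC (INR k)).

Lemma inv_binomial_left (k : nat) :
  / ((RtoC (INR k) + s) * cbinom (r + RtoC (INR k) + 1) (r - s + 1))
  = CGamma (r - s + 1) * (gamma_ratio k - gamma_ratio (S k)).
Proof.
  unfold cbinom, gamma_ratio.
  replace (r + RtoC (INR k) + 1 + 1) with (r + 1 + RtoC (INR (S k))) by (rewrite RtoC_INR_S; ring).
  replace (r + RtoC (INR k) + 1 - (r - s + 1) + 1) with (s + RtoC (INR (S k)))
    by (rewrite RtoC_INR_S; ring).
  rewrite !CGamma_add_INR_S, CGamma_add_1 by auto.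
  pose proof (CGamma_neq0 _ (nonpole_add_nat s k Hs)); pose proof (CGamma_neq0 _ Hrs).
  pose proof (CGamma_neq0 _ (nonpole_add_nat _ k Hr)); pose proof (Hs k); pose proof (Hr k).
  pose proof (nonpole_neq0 _ Hrs).
  replace (RtoC (INR k) + s) with (s + RtoC (INR k)) by ring.
  field; repeat split; auto.
Qed.

Lemma inv_binomial_right (j p : nat) :
  / (RtoC (INR (S j)) * cbinom (RtoC (INR p) + r) (r - s + 1))
  = (r - s + 1) * (CGamma (r - s + 1) * (gamma_ratio p / RtoC (INR (S j)))).
Proof.
  unfold cbinom, gamma_ratio.
  replace (RtoC (INR p) + r + 1) with (r + 1 + RtoC (INR p)) by ring.
  replace (RtoC (INR p) + r - (r - s + 1) + 1) with (s + RtoC (INR p)) by ring.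
  rewrite CGamma_add_1 by auto.
  pose proof (CGamma_neq0 _ (nonpole_add_nat s p Hs)); pose proof (CGamma_neq0 _ Hrs).
  pose proof (CGamma_neq0 _ (nonpole_add_nat _ p Hr)); pose proof (RtoC_neq0 _ (INR_S_pos j)).
  pose proof (nonpole_neq0 _ Hrs).
  field; repeat split; auto.
Qed.

Lemma inv_binomial_head : / (s * cbinom r s) = CGamma (r - s + 1) * gamma_ratio O.
Proof.
  unfold cbinom, gamma_ratio; simpl (INR 0); rewrite !Cplus_0_r, (CGamma_add_1 s Hs).
  pose proof (CGamma_neq0 _ Hs); pose proof (CGamma_neq0 _ Hrs); pose proof (CGamma_neq0 _ Hr).
  pose proof (nonpole_neq0 _ Hs).
  field; repeat split; auto.
Qed.

Theorem binomial_harmonic_sum (n : nat) :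
  csum (fun k => Hn (n - 1 - k)%nat /
          ((RtoC (INR k) + s) * cbinom (r + RtoC (INR k) + 1) (r - s + 1))) n
  = Hn n / (s * cbinom r s)
    - / (r - s + 1) *
      csum (fun j => / (RtoC (INR (S j)) *
              cbinom (RtoC (INR (n - S j)) + r) (r - s + 1))) n.
Proof.
  unfold Cdiv at 1 2; rewrite inv_binomial_head.
  rewrite (csum_ext _ (fun k => CGamma (r - s + 1) * (Hn (n - 1 - k) * (gamma_ratio k - gamma_ratio (S k)))))
    by (intros; rewrite inv_binomial_left; ring).
  rewrite (csum_ext (fun j => / _) (fun j => (r - s + 1) * (CGamma (r - s + 1) *
    (gamma_ratio (n - S j) / RtoC (INR (S j))))))
    by (intros; apply inv_binomial_right).
  rewrite !csum_mult_l, csum_harmonic_by_parts.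
  pose proof (nonpole_neq0 _ Hrs); field; auto.
Qed.

End Binomial_harmonic_sum.

(** * The digamma function at real arguments *)

Section Digamma_approximation.
Local Open Scope R_scope.

Definition digamma_approx (x : R) (m : nat) : R := ln (INR m) - rsum (fun j => / (x + INR j)) (S m).

Lemma digamma_approx_le_S (x : R) (m : nat) : 0 < x -> (1 <= m)%nat ->
  digamma_approx x m <= digamma_approx x (S m).
Proof.
  intros Hx Hm; unfold digamma_approx; cbn [rsum].
  assert (Hm0 : 0 < INR m) by (apply lt_0_INR; lia).
  replace (INR (S m)) with (INR m * (1 + / INR m)) by (rewrite S_INR; field; lra).
  rewrite ln_mult by (try apply Rplus_lt_0_compat; auto using Rinv_0_lt_compat; lra).
  destruct (ln_1_add_between (/ INR m)) as [L _]; [apply Rinv_0_lt_compat; auto|].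
  replace (/ INR m / (1 + / INR m)) with (/ (INR m + 1)) in L by (field; lra).
  assert (/ (x + INR m * (1 + / INR m)) <= / (INR m + 1)).
  { apply Rinv_le_contravar; [lra|]; replace (INR m * (1 + / INR m)) with (INR m + 1) by (field; lra); lra. }
  lra.
Qed.

Lemma digamma_approx_le_ln (x : R) (m : nat) : 0 < x -> (1 <= m)%nat -> digamma_approx x m <= ln x.
Proof.
  intros Hx Hm; unfold digamma_approx.
  assert (H : rsum (fun j => ln (x + INR (S j)) - ln (x + INR j)) (S m)
              <= rsum (fun j => / (x + INR j)) (S m)).
  { apply rsum_le; intros k _; pose proof (pos_INR k).
    assert (0 < / (x + INR k)) by (apply Rinv_0_lt_compat; lra).
    replace (ln (x + INR (S k))) with (ln ((x + INR k) * (1 + / (x + INR k))))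
      by (f_equal; rewrite S_INR; field; lra).
    rewrite ln_mult by lra; pose proof (ln_1_add_le (/ (x + INR k)) ltac:(lra)); lra. }
  rewrite (rsum_telescope (fun j => ln (x + INR j))) in H; simpl (INR 0) in H.
  rewrite Rplus_0_r in H.
  assert (ln (INR m) <= ln (x + INR (S m))) by (apply ln_le; [apply lt_0_INR; lia | rewrite S_INR; lra]).
  lra.
Qed.

Lemma digamma_approx_mono (x : R) (m p : nat) : 0 < x -> (1 <= m <= p)%nat ->
  digamma_approx x m <= digamma_approx x p.
Proof.
  intros Hx [Hm Hp]; induction Hp; [lra|].
  eapply Rle_trans; [apply IHHp | apply digamma_approx_le_S; auto; lia].
Qed.

Lemma digamma_approx_cvg (x : R) : 0 < x -> { c : R | Un_cv (fun m => digamma_approx x (S m)) c }.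
Proof.
  intro Hx; apply growing_cv.
  - intro n; apply digamma_approx_le_S; auto; lia.
  - exists (ln x); intros y [n ->]; apply digamma_approx_le_ln; auto; lia.
Qed.

Lemma digamma_approx_bounded (x : R) : 0 < x ->
  exists M, 0 <= M /\ forall m, (1 <= m)%nat -> Rabs (digamma_approx x m) <= M.
Proof.
  intro Hx; exists (Rabs (digamma_approx x 1) + Rabs (ln x)).
  pose proof (Rabs_pos (digamma_approx x 1)); pose proof (Rabs_pos (ln x)).
  split; [lra|]; intros m Hm; pose proof (digamma_approx_mono x 1 m Hx ltac:(lia)).
  pose proof (digamma_approx_le_ln x m Hx Hm).
  pose proof (Rle_abs (ln x)); pose proof (Rle_abs (- digamma_approx x 1)).
  rewrite Rabs_Ropp in *; apply Rabs_le; split; lra.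
Qed.

Lemma digamma_approx_add_1 (x : R) (m : nat) : 0 < x ->
  digamma_approx (x + 1) m - digamma_approx x m = / x - / (x + INR (S m)).
Proof.
  intro Hx; unfold digamma_approx.
  enough (E : forall n, rsum (fun j => / (x + INR j)) (S n) - rsum (fun j => / (x + 1 + INR j)) (S n)
                       = / x - / (x + INR (S n))) by (specialize (E m); lra).
  induction n; [simpl; rewrite !Rplus_0_r; ring|].
  cbn [rsum] in *; replace (x + 1 + INR (S n)) with (x + INR (S (S n))) by (rewrite (S_INR (S n)); ring).
  lra.
Qed.

End Digamma_approximation.

Lemma nonpole_real_add (x : R) (h : C) : (1 <= x)%R -> (Cmod h <= / 2)%R -> nonpole (RtoC x + h).
Proof.
  intros Hx Hh m E; pose proof (pos_INR m).
  assert (Eh : h = - RtoC (x + INR m)) by (rewrite RtoC_plus, <- (Cplus_0_l (- _)), <- E; ring).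
  rewrite Eh, Cmod_opp, Cmod_RtoC_nonneg in Hh; lra.
Qed.

Lemma nonpole_real (x : R) : (1 <= x)%R -> nonpole (RtoC x).
Proof.
  intro Hx; rewrite <- (Cplus_0_r (RtoC x)); apply nonpole_real_add; auto.
  rewrite Cmod_0; lra.
Qed.

Definition gauss_shift_factor (x : R) (h : C) (j : nat) : C :=
  cexp (h / RtoC (x + INR j)) / (1 + h / RtoC (x + INR j)).

Lemma Cmod_div_real_add_INR_le (x : R) (h : C) (j : nat) : (1 <= x)%R ->
  (Cmod (h / RtoC (x + INR j)) <= Cmod h / INR (S j))%R.
Proof.
  intro Hx; pose proof (pos_INR j); pose proof (Cmod_ge_0 h).
  rewrite Cmod_div, Cmod_RtoC_nonneg by (try apply RtoC_neq0; lra).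
  unfold Rdiv; apply Rmult_le_compat_l; auto; rewrite S_INR; apply Rinv_le_contravar; lra.
Qed.

Lemma Cmod_div_real_add_INR_le_half (x : R) (h : C) (j : nat) : (1 <= x)%R -> (Cmod h <= / 2)%R ->
  (Cmod (h / RtoC (x + INR j)) <= / 2)%R.
Proof.
  intros Hx Hh; eapply Rle_trans; [apply Cmod_div_real_add_INR_le; auto|].
  pose proof (INR_S_pos j); assert (1 <= INR (S j))%R by (rewrite S_INR; pose proof (pos_INR j); lra).
  pose proof (Cmod_ge_0 h); unfold Rdiv.
  apply (Rle_trans _ (Cmod h * 1)); [apply Rmult_le_compat_l; auto; rewrite <- Rinv_1; apply Rinv_le_contravar|]; lra.
Qed.

Lemma Cmod_gauss_shift_factor_sub_1_le (x : R) (h : C) (j : nat) : (1 <= x)%R -> (Cmod h <= / 2)%R ->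
  (Cmod (gauss_shift_factor x h j - 1) <= 12 * Cmod h ^ 2 * tel j)%R.
Proof.
  intros Hx Hh; set (b := h / RtoC (x + INR j)).
  pose proof (Cmod_div_real_add_INR_le_half x h j Hx Hh) as Hb; fold b in Hb.
  pose proof (Cmod_div_real_add_INR_le x h j Hx) as Hb'; fold b in Hb'.
  eapply Rle_trans; [apply (Cmod_cexp_div_sub_1_le b b); auto|].
  replace (b - b) with (RtoC 0) by ring; rewrite Cmod_0.
  pose proof (Cmod_ge_0 b); pose proof (Rsqr_inv_le_tel j); pose proof (pow2_ge_0 (Cmod h)).
  assert (Cmod b ^ 2 <= Cmod h ^ 2 * (/ INR (S j)) ^ 2)%R
    by (rewrite <- Rpow_mult_distr; apply pow_incr; split; auto).
  assert (Cmod h ^ 2 * (/ INR (S j)) ^ 2 <= Cmod h ^ 2 * (2 * tel j))%R by (apply Rmult_le_compat_l; auto).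
  nra.
Qed.

Lemma gauss_seq_real_add (x : R) (h : C) (m : nat) : (1 <= x)%R -> (Cmod h <= / 2)%R ->
  gauss_seq (RtoC x + h) m
  = gauss_seq (RtoC x) m * (cexp (h * RtoC (digamma_approx x m)) * cprod (gauss_shift_factor x h) (S m)).
Proof.
  intros Hx Hh; unfold gauss_seq; rewrite !rpowC_cexp.
  assert (Hxj : forall j, RtoC (x + INR j) <> 0) by (intro j; pose proof (pos_INR j); apply RtoC_neq0; lra).
  assert (Hb : forall j, 1 + h / RtoC (x + INR j) <> 0).
  { intro j; apply Cmod_neq0; pose proof (Cmod_1_add_ge _ (Cmod_div_real_add_INR_le_half x h j Hx Hh)); lra. }
  assert (E : (RtoC x + h) * RtoC (ln (INR m)) = RtoC x * RtoC (ln (INR m)) +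
     (h * RtoC (digamma_approx x m) + csum (fun j => h / RtoC (x + INR j)) (S m))).
  { rewrite (csum_ext _ (fun j => h * RtoC (/ (x + INR j)))).
    - rewrite csum_mult_l, csum_RtoC; unfold digamma_approx; rewrite RtoC_minus; ring.
    - intros k _; rewrite RtoC_inv; auto; intro E; apply (Hxj k); rewrite E; auto. }
  rewrite E, !cexp_add, cexp_csum.
  rewrite (cprod_ext (fun j => RtoC x + h + RtoC (INR j))
     (fun j => (RtoC x + RtoC (INR j)) * (1 + h / RtoC (x + INR j))))
    by (intros k _; rewrite RtoC_plus; field; rewrite <- RtoC_plus; auto).
  rewrite (cprod_ext (gauss_shift_factor x h)
     (fun j => cexp (h / RtoC (x + INR j)) * / (1 + h / RtoC (x + INR j)))) by reflexivity.
  rewrite !cprod_mult, cprod_inv by auto.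
  assert (cprod (fun j => RtoC x + RtoC (INR j)) (S m) <> 0)
    by (apply cprod_neq0; intros k _; rewrite <- RtoC_plus; auto).
  assert (cprod (fun j => 1 + h / RtoC (x + INR j)) (S m) <> 0) by (apply cprod_neq0; auto).
  field; split; auto.
Qed.

Lemma Cmod_cprod_gauss_shift_factor_sub_1_le (x : R) (h : C) (n : nat) : (1 <= x)%R -> (Cmod h <= / 2)%R ->
  (Cmod (cprod (gauss_shift_factor x h) n - 1) <= 12 * exp 3 * Cmod h ^ 2)%R.
Proof.
  intros Hx Hh; eapply Rle_trans; [apply Cmod_cprod_sub_1_le|].
  set (S0 := rsum (fun j => Cmod (gauss_shift_factor x h j - 1)) n).
  assert (HS0 : (S0 <= 12 * Cmod h ^ 2)%R).
  { eapply Rle_trans; [apply (rsum_le _ (fun j => 12 * Cmod h ^ 2 * tel j)%R)|].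
    - intros; apply Cmod_gauss_shift_factor_sub_1_le; auto.
    - rewrite rsum_mult_l; pose proof (rsum_tel_le n); pose proof (pow2_ge_0 (Cmod h)); nra. }
  assert (HS0' : (0 <= S0)%R) by (apply rsum_nonneg; intros; apply Cmod_ge_0).
  assert (S0 <= 3)%R by (pose proof (Cmod_ge_0 h); nra).
  pose proof (exp_sub_1_le_mul_exp S0); pose proof (exp_le_compat _ _ H).
  pose proof (exp_pos S0); nra.
Qed.

Lemma Cmod_cexp_le_2 (w : C) : (Cmod w <= / 2)%R -> (Cmod (cexp w) <= 2)%R.
Proof.
  intro Hw; rewrite Cmod_cexp; pose proof (re_le_Cmod w); pose proof (Rle_abs (Re w)).
  apply (Rle_trans _ (exp (/ 2))); [apply exp_le_compat; lra|].
  apply (Rle_trans _ (/ (1 - / 2))); [apply exp_le_inv_1_sub | ]; lra.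
Qed.

Lemma gauss_seq_real_add_remainder (x : R) (h : C) (m : nat) : (1 <= x)%R -> (Cmod h <= / 2)%R ->
  (Cmod (h * RtoC (digamma_approx x m)) <= / 2)%R ->
  (Cmod (gauss_seq (RtoC x + h) m - gauss_seq (RtoC x) m - h * (gauss_seq (RtoC x) m * RtoC (digamma_approx x m)))
   <= Cmod (gauss_seq (RtoC x) m) * ((24 * exp 3 + 3 * digamma_approx x m ^ 2) * Cmod h ^ 2))%R.
Proof.
  intros Hx Hh Hw; rewrite gauss_seq_real_add by auto.
  set (g := gauss_seq (RtoC x) m); set (c := digamma_approx x m) in *.
  set (w := h * RtoC c) in *; set (P := cprod (gauss_shift_factor x h) (S m)).
  replace (g * (cexp w * P) - g - h * (g * RtoC c)) with (g * (cexp w * (P - 1) + (cexp w - 1 - w)))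
    by (unfold w; ring).
  rewrite Cmod_mult; apply Rmult_le_compat_l; [apply Cmod_ge_0|].
  eapply Rle_trans; [apply Cmod_triangle|]; rewrite Cmod_mult.
  pose proof (Cmod_cexp_le_2 w Hw); pose proof (Cmod_cexp_sub_1_sub_le w Hw).
  pose proof (Cmod_cprod_gauss_shift_factor_sub_1_le x h (S m) Hx Hh) as HP; fold P in HP.
  assert (Cmod w ^ 2 = c ^ 2 * Cmod h ^ 2)%R
    by (unfold w; rewrite Cmod_mult, Cmod_R, Rpow_mult_distr, <- (pow2_abs c); ring).
  pose proof (Cmod_ge_0 (cexp w)); pose proof (Cmod_ge_0 (P - 1)); pose proof (exp_pos 3).
  assert (Cmod (cexp w) * Cmod (P - 1) <= 2 * (12 * exp 3 * Cmod h ^ 2))%R by (apply Rmult_le_compat; auto).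
  nra.
Qed.

Lemma CGamma_real_add_remainder (x : R) : (1 <= x)%R ->
  exists c K d : R, Un_cv (fun m => digamma_approx x (S m)) c /\ (0 < d)%R /\
  forall h, (Cmod h <= d)%R ->
  (Cmod (CGamma (RtoC x + h) - CGamma (RtoC x) - h * (CGamma (RtoC x) * RtoC c)) <= K * Cmod h ^ 2)%R.
Proof.
  intro Hx.
  destruct (digamma_approx_cvg x ltac:(lra)) as [c Hc].
  destruct (digamma_approx_bounded x ltac:(lra)) as [M [HM0 HM]].
  pose proof (lim_gauss_seq_CGamma _ (nonpole_real x Hx)) as Hg.
  set (G := (Cmod (CGamma (RtoC x)) + 1)%R).
  exists c, (G * (24 * exp 3 + 3 * M ^ 2))%R, (/ (2 * (M + 1)))%R.
  split; auto; split; [apply Rinv_0_lt_compat; lra|].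
  intros h Hh; pose proof (Cmod_ge_0 h).
  assert (HhM : (Cmod h <= / 2 /\ Cmod h * M <= / 2)%R).
  { apply (Rmult_le_compat_r (2 * (M + 1))) in Hh; [|lra].
    rewrite Rinv_l in Hh by lra; split; nra. }
  assert (Hcm : Clim_seq (fun m => RtoC (digamma_approx x m)) c).
  { apply (lim_seq_shift _ _ 1), (filterlim_ext (fun m => RtoC (digamma_approx x (S m))));
      [intro; rewrite Nat.add_1_r; auto|].
    apply lim_seq_RtoC, is_lim_seq_Reals, Hc. }
  pose proof (lim_gauss_seq_CGamma _ (nonpole_real_add x h Hx (proj1 HhM))) as Hgh.
  eapply lim_seq_Cmod_le.
  { apply lim_seq_Cminus; [apply lim_seq_Cminus; eauto|].
    apply lim_seq_Cmult; [apply filterlim_const | apply lim_seq_Cmult; eauto]. }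
  destruct (eventually_Cmod_le_lim _ _ Hg) as [N HN].
  exists (max 1 N); intros m Hm; specialize (HN m ltac:(lia)); fold G in HN.
  assert (HcM : (Rabs (digamma_approx x m) <= M)%R) by (apply HM; lia).
  eapply Rle_trans; [apply gauss_seq_real_add_remainder; try tauto|].
  { rewrite Cmod_mult, Cmod_R; eapply Rle_trans; [|apply HhM]; apply Rmult_le_compat_l; auto. }
  assert (digamma_approx x m ^ 2 <= M ^ 2)%R
    by (rewrite <- (pow2_abs (digamma_approx x m)); apply pow_incr; split; auto; apply Rabs_pos).
  rewrite Rmult_assoc; apply Rmult_le_compat; auto using Cmod_ge_0.
  - pose proof (pow2_ge_0 (digamma_approx x m)); pose proof (exp_pos 3); pose proof (pow2_ge_0 (Cmod h)); nra.
  - apply Rmult_le_compat_r; [apply pow2_ge_0 | lra].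
Qed.

Lemma is_derive_of_remainder_bound (f : C -> C) (z l : C) (K d : R) : (0 < d)%R ->
  (forall h, (Cmod h <= d)%R -> (Cmod (f (z + h)%C - f z - h * l) <= K * Cmod h ^ 2)%R) ->
  @is_derive C_AbsRing C_NormedModule f z l.
Proof.
  intros Hd HT; split; [apply (@is_linear_scal_l C_AbsRing C_NormedModule)|].
  intros z' Hz'; apply (@is_filter_lim_locally_unique C_AbsRing (AbsRing_NormedModule C_AbsRing)) in Hz'.
  subst z'; intros eps.
  set (K1 := (Rabs K + 1)%R); assert (HK1 : (0 < K1)%R) by (pose proof (Rabs_pos K); unfold K1; lra).
  assert (Hdel : (0 < Rmin d (eps / K1))%R) by (apply Rmin_pos; auto; apply Rdiv_lt_0_compat; auto; apply cond_pos).
  exists (mkposreal _ Hdel); intros y Hy.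
  change (Cmod (y - z) < Rmin d (eps / K1))%R in Hy.
  change (Cmod (f y - f z - (y - z) * l) <= eps * Cmod (y - z))%R.
  pose proof (Rmin_l d (eps / K1)); pose proof (Rmin_r d (eps / K1)).
  set (h := y - z) in *; replace y with (z + h) by (unfold h; ring).
  eapply Rle_trans; [apply HT; lra|].
  pose proof (Cmod_ge_0 h); pose proof (Rle_abs K).
  assert (K1 * Cmod h <= eps)%R.
  { apply (Rmult_le_reg_r (/ K1)); [apply Rinv_0_lt_compat; lra|].
    replace (K1 * Cmod h * / K1)%R with (Cmod h) by (field; lra); unfold Rdiv in *; lra. }
  replace (K * Cmod h ^ 2)%R with (K * Cmod h * Cmod h)%R by ring.
  apply Rmult_le_compat_r; auto; unfold K1 in *; nra.
Qed.

Lemma digamma_real (x : R) : (1 <= x)%R ->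
  exists c, Un_cv (fun m => digamma_approx x (S m)) c /\ digamma (RtoC x) = RtoC c.
Proof.
  intro Hx; destruct (CGamma_real_add_remainder x Hx) as [c [K [d [Hc [Hd HT]]]]].
  exists c; split; auto.
  pose proof (is_derive_of_remainder_bound _ _ _ K d Hd HT) as Hder.
  pose proof (CGamma_neq0 _ (nonpole_real x Hx)).
  unfold digamma, Cderiv.
  pose proof (epsilon_spec (inhabits (RtoC 0))
    (fun l : C => @is_derive C_AbsRing C_NormedModule CGamma (RtoC x) l) (ex_intro _ _ Hder)) as He.
  rewrite <- (is_C_derive_unique _ _ _ He), (is_C_derive_unique _ _ _ Hder); field; auto.
Qed.

Lemma digamma_add_1 (x : R) : (1 <= x)%R -> digamma (RtoC x + 1) - digamma (RtoC x) = / RtoC x.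
Proof.
  intro Hx; destruct (digamma_real x Hx) as [c1 [H1 E1]].
  destruct (digamma_real (x + 1) ltac:(lra)) as [c2 [H2 E2]].
  replace (RtoC x + 1) with (RtoC (x + 1)) by (rewrite RtoC_plus; auto).
  rewrite E1, E2, <- RtoC_minus, <- RtoC_inv by lra; f_equal.
  apply (UL_sequence _ _ _ (CV_minus _ _ _ _ H2 H1)).
  intros eps Heps; destruct (eventually_INR_gt (/ eps)) as [N HN]; exists N; intros n Hn.
  specialize (HN n Hn); pose proof (Rinv_0_lt_compat _ Heps).
  rewrite digamma_approx_add_1 by lra; unfold R_dist.
  replace (/ x - / (x + INR (S (S n))) - / x)%R with (- / (x + INR (S (S n))))%R by ring.
  assert (0 < x + INR (S (S n)))%R by (rewrite !S_INR; lra).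
  rewrite Rabs_Ropp, Rabs_right by (left; apply Rinv_0_lt_compat; lra).
  rewrite <- (Rinv_inv eps); apply Rinv_lt_contravar; [apply Rmult_lt_0_compat|rewrite !S_INR]; lra.
Qed.

Lemma digamma_add_INR (x : R) (k : nat) : (1 <= x)%R ->
  digamma (RtoC (INR k) + RtoC x) - digamma (RtoC x) = csum (fun j => / (RtoC (INR j) + RtoC x)) k.
Proof.
  intro Hx; induction k; [simpl; rewrite Cplus_0_l; ring|].
  cbn [csum]; rewrite <- IHk.
  pose proof (digamma_add_1 (INR k + x) ltac:(pose proof (pos_INR k); lra)) as H.
  rewrite RtoC_plus in H; rewrite RtoC_INR_S.
  replace (RtoC (INR k) + 1 + RtoC x) with (RtoC (INR k) + RtoC x + 1) by ring.
  rewrite <- H; ring.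
Qed.

Lemma Hc_sub (x : R) (n : nat) : (1 <= x)%R ->
  Hc (RtoC (INR n) + RtoC x) - Hc (RtoC x - 1) = csum (fun j => / (RtoC (INR j) + RtoC x)) (S n).
Proof.
  intro Hx; unfold Hc; rewrite <- (digamma_add_INR x (S n) Hx), RtoC_INR_S.
  replace (RtoC x - 1 + 1) with (RtoC x) by ring.
  replace (RtoC (INR n) + RtoC x + 1) with (RtoC (INR n) + 1 + RtoC x) by ring; ring.
Qed.

Lemma csum_inv_shift_div_rev (c : C) (N : nat) : nonpole c ->
  csum (fun j => / (RtoC (INR (N - S j)) + c) / RtoC (INR (S j))) N
  = (Hn N + csum (fun j => / (RtoC (INR j) + c)) N) / (RtoC (INR N) + c).
Proof.
  intro Hc; assert (HN : RtoC (INR N) + c <> 0) by (rewrite Cplus_comm; apply Hc).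
  rewrite <- (csum_rev (fun j => / (RtoC (INR j) + c))).
  change (Hn N) with (csum (fun j => / RtoC (INR (S j))) N); rewrite <- csum_plus.
  transitivity (/ (RtoC (INR N) + c) *
    csum (fun j => / RtoC (INR (S j)) + / (RtoC (INR (N - S j)) + c)) N); [|field; auto].
  rewrite <- csum_mult_l; apply csum_ext; intros j Hj.
  assert (Hnj : RtoC (INR (N - S j)) = RtoC (INR N) - RtoC (INR (S j)))
    by (rewrite minus_INR, RtoC_minus by lia; auto).
  assert (RtoC (INR (N - S j)) + c <> 0) by (rewrite Cplus_comm; apply Hc).
  pose proof (RtoC_neq0 _ (INR_S_pos j)).
  rewrite Hnj in *; field; repeat split; auto.
Qed.

(** * The special cases for real s *)

Lemma harmonic_sum_quadratic (n : nat) (s : R) : (1 <= s)%R ->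
  csum (fun k => Hn (n - k)%nat /
          ((RtoC (INR k) + RtoC s) * (RtoC (INR k) + 1 + RtoC s))) (S n)
  = (RtoC (INR n) + 1) / (RtoC s * (RtoC (INR n) + 1 + RtoC s)) * Hn (S n)
    - / (RtoC (INR n) + 1 + RtoC s) *
      (Hc (RtoC (INR n) + RtoC s) - Hc (RtoC s - 1)).
Proof.
  intro Hs; set (a := fun k : nat => / (RtoC (INR k) + RtoC s)).
  rewrite (csum_ext _ (fun k => Hn (S n - 1 - k) * (a k - a (S k)))).
  2: { intros k Hk; replace (S n - 1 - k)%nat with (n - k)%nat by lia; unfold a.
       pose proof (INR_add_real_neq0 k s ltac:(lra)); pose proof (INR_add_real_neq0 (S k) s ltac:(lra)).
       rewrite RtoC_INR_S in *; field; auto. }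
  rewrite csum_harmonic_by_parts, Hc_sub by auto; unfold a.
  rewrite csum_inv_shift_div_rev by (apply nonpole_real; auto).
  pose proof (INR_add_real_neq0 (S n) s ltac:(lra)); pose proof (RtoC_neq0 s ltac:(lra)).
  simpl (INR 0); rewrite RtoC_INR_S in *; field; auto.
Qed.

Lemma harmonic_sum_cubic (n : nat) (s : R) : (1 <= s)%R ->
  csum (fun k => Hn (n - k)%nat /
          ((RtoC (INR k) + RtoC s) * (RtoC (INR k) + 1 + RtoC s)
           * (RtoC (INR k) + 2 + RtoC s))) (S n)
  = / 2 * ( Hn (S n) / (RtoC s * (RtoC s + 1))
      - / (RtoC (INR n) + 1 + RtoC s) *
          (Hn (S n) + Hc (RtoC (INR n) + RtoC s) - Hc (RtoC s - 1))
      + / (RtoC (INR n) + 2 + RtoC s) *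
          (Hn (S n) + Hc (RtoC (INR n) + 1 + RtoC s) - Hc (RtoC s))).
Proof.
  intro Hs; set (a := fun (x : R) (k : nat) => / (RtoC (INR k) + RtoC x)).
  set (b := fun k => a s k - a (s + 1)%R k).
  rewrite (csum_ext _ (fun k => / 2 * (Hn (S n - 1 - k) * (b k - b (S k))))).
  2: { intros k Hk; replace (S n - 1 - k)%nat with (n - k)%nat by lia; unfold b, a.
       pose proof (INR_add_real_neq0 k s ltac:(lra)); pose proof (INR_add_real_neq0 (S k) s ltac:(lra)).
       pose proof (INR_add_real_neq0 (S k) (s + 1) ltac:(lra)).
       rewrite !RtoC_INR_S, RtoC_plus in *; field; repeat split; auto. }
  rewrite csum_mult_l, csum_harmonic_by_parts; unfold b.
  replace (Hn (S n) + Hc (RtoC (INR n) + RtoC s) - Hc (RtoC s - 1))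
    with (Hn (S n) + csum (fun j => / (RtoC (INR j) + RtoC s)) (S n))
    by (rewrite <- Hc_sub by auto; ring).
  replace (Hn (S n) + Hc (RtoC (INR n) + 1 + RtoC s) - Hc (RtoC s))
    with (Hn (S n) + csum (fun j => / (RtoC (INR j) + RtoC (s + 1))) (S n)).
  2: { rewrite <- Hc_sub, RtoC_plus by lra.
       replace (RtoC (INR n) + (RtoC s + 1)) with (RtoC (INR n) + 1 + RtoC s) by ring.
       replace (RtoC s + 1 - 1) with (RtoC s) by ring; ring. }
  rewrite (csum_ext _ (fun j => a s (S n - S j)%nat / RtoC (INR (S j)) - a (s + 1)%R (S n - S j)%nat / RtoC (INR (S j))))
    by (intros; field; apply RtoC_neq0, INR_S_pos).
  rewrite csum_minus; unfold a.
  rewrite !csum_inv_shift_div_rev by (apply nonpole_real; lra).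
  pose proof (INR_add_real_neq0 (S n) s ltac:(lra)); pose proof (INR_add_real_neq0 (S n) (s + 1) ltac:(lra)).
  pose proof (RtoC_neq0 s ltac:(lra)); pose proof (RtoC_neq0 (s + 1) ltac:(lra)).
  simpl (INR 0); rewrite !RtoC_INR_S, !RtoC_plus in *.
  replace (RtoC (INR n) + 2 + RtoC s) with (RtoC (INR n) + 1 + (RtoC s + 1)) by ring.
  field; repeat split; auto.
Qed.

Theorem corollary14 :
  (forall (n : nat) (r s : C),
      not_negint r -> not_negint s -> s <> 0 -> not_negint (r - s) ->
      csum (fun k => Hn (n - 1 - k)%nat /
              ((RtoC (INR k) + s) * cbinom (r + RtoC (INR k) + 1) (r - s + 1))) n
      = Hn n / (s * cbinom r s)
        - / (r - s + 1) *
          csum (fun j => / (RtoC (INR (S j)) *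
                  cbinom (RtoC (INR (n - S j)) + r) (r - s + 1))) n)
  /\
  (forall (n : nat) (s : R), (1 <= s)%R ->
      csum (fun k => Hn (n - k)%nat /
              ((RtoC (INR k) + RtoC s) * (RtoC (INR k) + 1 + RtoC s))) (S n)
      = (RtoC (INR n) + 1) / (RtoC s * (RtoC (INR n) + 1 + RtoC s)) * Hn (S n)
        - / (RtoC (INR n) + 1 + RtoC s) *
          (Hc (RtoC (INR n) + RtoC s) - Hc (RtoC s - 1))
   /\
      csum (fun k => Hn (n - k)%nat /
              ((RtoC (INR k) + RtoC s) * (RtoC (INR k) + 1 + RtoC s)
               * (RtoC (INR k) + 2 + RtoC s))) (S n)
      = / 2 * ( Hn (S n) / (RtoC s * (RtoC s + 1))
          - / (RtoC (INR n) + 1 + RtoC s) *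
              (Hn (S n) + Hc (RtoC (INR n) + RtoC s) - Hc (RtoC s - 1))
          + / (RtoC (INR n) + 2 + RtoC s) *
              (Hn (S n) + Hc (RtoC (INR n) + 1 + RtoC s) - Hc (RtoC s)))).
Proof.
  split.
  - intros n r s Hr Hs Hs0 Hrs; apply binomial_harmonic_sum.
    + apply nonpole_of_not_negint; auto.
    + apply nonpole_add_1_of_not_negint; auto.
    + apply nonpole_add_1_of_not_negint; auto.
  - intros n s Hs; split; [apply harmonic_sum_quadratic | apply harmonic_sum_cubic]; auto.
Qed.
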